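(* Let $M\geq 1$. A seller holds $M$ units of a single good; the seller values a bundle of $i$ units at $\sigma_i$ and a buyer values a bundle of $i$ units at $\beta_i$ ($i=0,\dots,M$, with $\beta_0=0$). The price per unit $p$ is fixed exogenously and both agents have utilities quasi-linear in money. Then the competitive ratio of any DSIC mechanism is (i) at most $1/M$ with general valuations, and (ii) at most $1/H_M$ with submodular valuations, where $H_M=\sum_{j=1}^M\frac1j$.
   Context: Trading $i$ units at price $p$ gives the buyer utility $b_i=\beta_i-p\,i$ and the seller utility $s_i=p\,i+\sigma_{M-i}-\sigma_M$ (so $b_0=s_0=0$ corresponds to no trade). A mechanism receives the agents' reported valuations and outputs a probability distribution $(r_0,\dots,r_M)$ over the number of units traded (at price $p$ per unit). It is DSIC if for each agent reporting the true valuation maximizes his expected utility ($\sum_i r_i b_i$ for the buyer, $\sum_i r_i s_i$ for the seller) whatever the other agent reports. The optimal gain-from-trade subject to individual rationality is $OPT=\max\{b_i+s_i: 0\leq i\leq M,\ b_i\geq 0,\ s_i\geq 0\}$; the mechanism's gain under truthful reports is $G=\sum_{i=1}^M r_i(b_i+s_i)$, and its competitive ratio is the minimum of $G/OPT$ over all admissible valuation profiles. A valuation $(v_i)_{i=0}^M$ is submodular (decreasing marginal returns) if $v_{i+1}-v_i\leq v_i-v_{i-1}$ for all $1\leq i\leq M-1$; in case (ii) both $\beta$ and $\sigma$ are submodular and admissible profiles (true and reported) are the submodular ones. *)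

From mathcomp Require Import all_boot all_order all_algebra.
Set Implicit Arguments. Unset Strict Implicit. Unset Printing Implicit Defensive.
Import Order.TTheory GRing.Theory Num.Theory.
Local Open Scope ring_scope.

Section Trade.
Variables (R : realFieldType) (M : nat).

Definition valuation := 'I_M.+1 -> R.

(* A mechanism maps reported (buyer, seller) valuations to a vector
   (r_0, ..., r_M) of probabilities over the number of units traded. *)
Definition mechanism := valuation -> valuation -> 'I_M.+1 -> R.

Definition is_distr (r : 'I_M.+1 -> R) : Prop :=
  (forall i, 0 <= r i) /\ \sum_(i < M.+1) r i = 1.

Definition bu (p : R) (beta : valuation) (i : 'I_M.+1) : R :=
  beta i - p * i%:R.

Definition su (p : R) (sigma : valuation) (i : 'I_M.+1) : R :=
  p * i%:R + sigma (rev_ord i) - sigma ord_max.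

Definition submodular (v : valuation) : Prop :=
  forall i : nat, (1 <= i)%N -> (i + 1 <= M)%N ->
    v (inord (i + 1)) - v (inord i) <= v (inord i) - v (inord (i - 1)).

(* Admissible valuations; [sub] = true is case (ii) (submodular). *)
Definition adm_buyer (sub : bool) (beta : valuation) : Prop :=
  beta ord0 = 0 /\ (sub -> submodular beta).
Definition adm_seller (sub : bool) (sigma : valuation) : Prop :=
  sub -> submodular sigma.

Definition exp_util (r : 'I_M.+1 -> R) (u : 'I_M.+1 -> R) : R :=
  \sum_(i < M.+1) r i * u i.

Definition DSIC (sub : bool) (p : R) (f : mechanism) : Prop :=
  (forall beta sigma, adm_buyer sub beta -> adm_seller sub sigma ->
     is_distr (f beta sigma)) /\
  (forall beta beta' sigma', adm_buyer sub beta -> adm_buyer sub beta' ->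
     adm_seller sub sigma' ->
     exp_util (f beta' sigma') (bu p beta) <= exp_util (f beta sigma') (bu p beta)) /\
  (forall sigma sigma' beta', adm_seller sub sigma -> adm_seller sub sigma' ->
     adm_buyer sub beta' ->
     exp_util (f beta' sigma') (su p sigma) <= exp_util (f beta' sigma) (su p sigma)).

Definition OPT (p : R) (beta sigma : valuation) : R :=
  \big[Num.max/0]_(i < M.+1 | (0 <= bu p beta i) && (0 <= su p sigma i))
     (bu p beta i + su p sigma i).

Definition gain (p : R) (f : mechanism) (beta sigma : valuation) : R :=
  \sum_(i < M.+1 | (0 < i)%N) f beta sigma i * (bu p beta i + su p sigma i).

(* [c] is a lower bound on G/OPT over all admissible profiles with OPT > 0;
   the competitive ratio is the largest such c. *)
Definition ratio_guarantee (sub : bool) (p : R) (f : mechanism) (c : R) : Prop :=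
  forall beta sigma, adm_buyer sub beta -> adm_seller sub sigma ->
    0 < OPT p beta sigma -> c * OPT p beta sigma <= gain p f beta sigma.

End Trade.

Definition harmonic (R : realFieldType) (M : nat) : R :=
  \sum_(j < M) (j.+1%:R)^-1.

From mathcomp Require Import all_boot all_order all_algebra.
From mathcomp Require Import ring lra zify.
Import Order.TTheory GRing.Theory Num.Theory.
Set Implicit Arguments. Unset Strict Implicit. Unset Printing Implicit Defensive.
Local Open Scope ring_scope.

(* Both bounds come from one chain of incentive constraints; we work directly
   with utility profiles (b_i), (s_i), which valuations realise as long as
   b_0 = s_0 = 0.  Fix a truthful seller s and buyers b_1, ..., b_{M+1}, and let
   r_m be the outcome for the reports (b_m, s).  Truthfulness of the buyer gives
   E_{r_{m-1}}[b_m] <= E_{r_m}[b_m].  Against a lying seller s' for which trading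
   m units is the only efficient trade, the ratio guarantee and truthfulness of
   the seller force E_{r_m}[s] to be large; as b_m + eps_m s <= b_{m+1}, this
   raises E_{r_m}[b_{m+1}] above E_{r_m}[b_m] by about c, resp. c/(m+1).  After M
   steps, M c, resp. c H_M, is at most max b_{M+1}, which is 1 up to an error
   vanishing with a free parameter.

   General valuations: s_k = t^k, and b_m is a plateau, nearly 1 below m, 0 at m
   and very negative above.  Submodular valuations: s_k = k, the lie is
   s'_k = x k, and b_m is a tent, the minimum of three affine functions peaking
   at m. *)

Section Concavity.
Variable R : realFieldType.

Definition concave (v : nat -> R) : Prop := forall k, v k.+2 + v k <= 2 * v k.+1.

Lemma concave_min (u v : nat -> R) :
  concave u -> concave v -> concave (fun k => Num.min (u k) (v k)).
Proof.
move=> u_cvx v_cvx k.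
have min_le (a b : R) : Num.min a b <= a /\ Num.min a b <= b by case: (lerP a b) => ?; lra.
have [u2 v2] := min_le (u k.+2) (v k.+2); have [u0 v0] := min_le (u k) (v k).
by case: (lerP (u k.+1) (v k.+1)) => _; [have := u_cvx k | have := v_cvx k]; lra.
Qed.

End Concavity.

Lemma ler1_of_forall_ler1Ddiv (R : realFieldType) (a K : R) :
  0 <= K -> (forall x, 2 <= x -> a <= 1 + K / x) -> a <= 1.
Proof.
move=> K_ge0 h; rewrite leNgt; apply/negP => a_gt1.
have a1_neq0 : a - 1 != 0 by rewrite subr_eq0 gt_eqF.
have Ka_ge0 : 0 <= K / (a - 1) by rewrite divr_ge0 // subr_ge0 ltW.
pose x := K / (a - 1) + 2.
have x_gt0 : 0 < x by rewrite /x; lra.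
have := h x (ler_wpDl Ka_ge0 (lexx 2)) => /(ler_wpM2r (ltW x_gt0)).
have -> : (1 + K / x) * x = x + K by rewrite mulrDl mul1r divfK ?gt_eqF.
have -> : a * x = x + K + 2 * (a - 1) by rewrite /x; field.
lra.
Qed.

Section Expectation.
Variables (R : realFieldType) (M : nat).

Definition expect (r : 'I_M.+1 -> R) (u : nat -> R) : R := \sum_(i < M.+1) r i * u i.

Lemma expectD r u v : expect r (fun k => u k + v k) = expect r u + expect r v.
Proof. by rewrite -big_split; apply: eq_bigr => i _; rewrite mulrDr. Qed.

Lemma expectZ r a u : expect r (fun k => a * u k) = a * expect r u.
Proof. by rewrite mulr_sumr; apply: eq_bigr => i _; rewrite mulrCA. Qed.

Lemma expect_cst r a : is_distr r -> expect r (fun=> a) = a.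
Proof. by case=> _ r1; rewrite /expect -big_distrl /= r1 mul1r. Qed.

Lemma ler_expect r u v : is_distr r ->
  (forall k, (k <= M)%N -> u k <= v k) -> expect r u <= expect r v.
Proof.
by case=> r_ge0 _ uv; apply: ler_sum => i _; rewrite ler_wpM2l // uv // -ltnS.
Qed.

End Expectation.

Section Profiles.
Variables (R : realFieldType) (M : nat) (p : R).

Definition buyer_of (b : nat -> R) : valuation R M := fun j => b j + p * j%:R.

Definition seller_of (s : nat -> R) : valuation R M :=
  fun j => s (M - j)%N - p * (M - j)%:R.

Lemma bu_buyer_of b i : bu p (buyer_of b) i = b i.
Proof. by rewrite /bu /buyer_of addrK. Qed.

Lemma su_seller_of s i : s 0%N = 0 -> su p (seller_of s) i = s i.
Proof.
move=> s0; rewrite /su /seller_of /= subSS subnn s0 subKn; last by rewrite -ltnS.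
by rewrite mulr0 subr0 subr0 addrC subrK.
Qed.

Lemma submodular_buyer_of b : concave b -> submodular (buyer_of b).
Proof.
move=> b_cvx [|k] // _ kM; rewrite addn1 in kM.
rewrite /buyer_of !inordK ?addn1 ?subn1 //=; try lia.
by have := b_cvx k; rewrite -!natr1; lra.
Qed.

Lemma submodular_seller_of s : concave s -> submodular (seller_of s).
Proof.
move=> s_cvx [|k] // _ kM; rewrite addn1 in kM.
rewrite /seller_of !inordK ?addn1 ?subn1 //=; try lia.
have -> : (M - k = (M - k.+2).+2)%N by lia.
have -> : (M - k.+1 = (M - k.+2).+1)%N by lia.
by have := s_cvx (M - k.+2)%N; rewrite -!natr1; lra.
Qed.

Lemma exp_util_buyer_of r b : exp_util r (bu p (buyer_of b)) = expect r b.
Proof. by apply: eq_bigr => i _; rewrite bu_buyer_of. Qed.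

Lemma exp_util_seller_of r s :
  s 0%N = 0 -> exp_util r (su p (seller_of s)) = expect r s.
Proof. by move=> s0; apply: eq_bigr => i _; rewrite su_seller_of. Qed.

Lemma gain_of f (b s : nat -> R) : b 0%N = 0 -> s 0%N = 0 ->
  gain p f (buyer_of b) (seller_of s) =
  expect (f (buyer_of b) (seller_of s)) (fun k => b k + s k).
Proof.
move=> b0 s0; rewrite /expect (bigD1 ord0) //= b0 s0 addr0 mulr0 add0r.
by apply: eq_big => [i|i _]; rewrite ?lt0n // bu_buyer_of su_seller_of.
Qed.

Lemma OPT_ge (b s : nat -> R) (i : 'I_M.+1) : s 0%N = 0 -> 0 <= b i -> 0 <= s i ->
  b i + s i <= OPT p (buyer_of b) (seller_of s).
Proof.
move=> s0; rewrite -(bu_buyer_of b i) -(su_seller_of i s0) => bi_ge0 si_ge0.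
by apply: le_bigmax_cond; rewrite bi_ge0 si_ge0.
Qed.

End Profiles.

Definition admissible (R : realFieldType) (sub : bool) (v : nat -> R) : Prop :=
  v 0%N = 0 /\ (sub -> concave v).

Section Incentives.
Variables (R : realFieldType) (M : nat) (sub : bool) (p c : R) (f : mechanism R M).
Hypotheses (f_DSIC : DSIC sub p f) (f_ratio : ratio_guarantee sub p f c).
Hypothesis c_ge0 : 0 <= c.

Definition outcome (b s : nat -> R) : 'I_M.+1 -> R := f (buyer_of p b) (seller_of p s).

Lemma adm_buyer_of b : admissible sub b -> adm_buyer sub (buyer_of (M:=M) p b).
Proof.
case=> b0 b_cvx; split=> [|/b_cvx/submodular_buyer_of//].
by rewrite /buyer_of /= b0 mulr0 addr0.
Qed.

Lemma adm_seller_of s : admissible sub s -> adm_seller sub (seller_of (M:=M) p s).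
Proof. by case=> _ s_cvx /s_cvx/submodular_seller_of. Qed.

Lemma outcome_distr b s :
  admissible sub b -> admissible sub s -> is_distr (outcome b s).
Proof. by move=> /adm_buyer_of b_adm /adm_seller_of s_adm; apply: f_DSIC.1. Qed.

Lemma buyer_IC b b' s :
  admissible sub b -> admissible sub b' -> admissible sub s ->
  expect (outcome b' s) b <= expect (outcome b s) b.
Proof.
move=> /adm_buyer_of b_adm /adm_buyer_of b'_adm /adm_seller_of s_adm.
by rewrite -!(exp_util_buyer_of p); apply: f_DSIC.2.1.
Qed.

Lemma seller_IC s s' b :
  admissible sub s -> admissible sub s' -> admissible sub b ->
  expect (outcome b s') s <= expect (outcome b s) s.
Proof.
move=> s_adm s'_adm /adm_buyer_of b_adm.
rewrite -!(exp_util_seller_of p); try exact: s_adm.1.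
by apply: f_DSIC.2.2 => //; apply: adm_seller_of.
Qed.

Lemma ratio_at b s k :
  admissible sub b -> admissible sub s -> (k <= M)%N ->
  0 <= b k -> 0 <= s k -> 0 < b k + s k ->
  c * (b k + s k) <= expect (outcome b s) (fun i => b i + s i).
Proof.
move=> b_adm s_adm kM bk_ge0 sk_ge0 w_gt0.
have := @OPT_ge R M p b s (inord k) s_adm.1; rewrite inordK // => /(_ bk_ge0 sk_ge0) OPT_w.
rewrite /outcome -gain_of ?b_adm.1 ?s_adm.1 //.
apply: le_trans (f_ratio (adm_buyer_of b_adm) (adm_seller_of s_adm) _).
- by rewrite ler_wpM2l.
- exact: lt_le_trans OPT_w.
Qed.

(* [s'] is a lie of the seller whose true utility is [s]. *)
Lemma seller_lie_bound b s s' k (a d : R) :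
  admissible sub b -> admissible sub s -> admissible sub s' -> (k <= M)%N ->
  0 <= b k -> 0 <= s' k -> 0 < b k + s' k -> 0 <= d ->
  (forall i, (i <= M)%N -> b i + s' i <= a + d * s i) ->
  c * (b k + s' k) <= a + d * expect (outcome b s) s.
Proof.
move=> b_adm s_adm s'_adm kM bk_ge0 s'k_ge0 w_gt0 d_ge0 welfare_le.
apply: le_trans (ratio_at b_adm s'_adm kM bk_ge0 s'k_ge0 w_gt0) _.
apply: le_trans (ler_expect (outcome_distr b_adm s'_adm) welfare_le) _.
rewrite expectD expectZ expect_cst; last exact: outcome_distr.
by rewrite lerD2l ler_wpM2l //; apply: seller_IC.
Qed.

End Incentives.

Section GeneralValuations.
Variables (R : realFieldType) (M : nat) (t : R).
Hypotheses (M_gt0 : (0 < M)%N) (t_ge2 : 2 <= t).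

Definition geom (k : nat) : R := if k == 0%N then 0 else t ^+ k.

Definition plateau_level (m : nat) : R := 1 + (m%:R - 2) / t.

(* Deep enough for [plateau_base] (m = 1) and [plateau_step] (m >= 2). *)
Definition plateau_depth (m : nat) : R :=
  if m == 1%N then t ^+ M.+1 * (M%:R - 1) + t ^+ M else t ^+ M * (M%:R - m%:R + 1).

Definition plateau (m k : nat) : R :=
  if k == 0%N then 0 else if (k < m)%N then plateau_level m
  else if k == m then 0 else - plateau_depth m.

Definition spike (m k : nat) : R := if k == m then t ^+ m else - plateau m k.

Let t_gt1 : 1 < t. Proof. by apply: lt_le_trans t_ge2; rewrite ltr1n. Qed.
Let t_gt0 : 0 < t. Proof. exact: lt_trans ltr01 t_gt1. Qed.

Let ler_pow k n : (k <= n)%N -> t ^+ k <= t ^+ n.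
Proof. by move=> kn; rewrite ler_eXn2l. Qed.

Let pow_ge0 k : 0 <= t ^+ k. Proof. exact: exprn_ge0 (ltW t_gt0). Qed.

Lemma geom_ge0 k : 0 <= geom k.
Proof. by rewrite /geom; case: eqP => _; rewrite ?pow_ge0. Qed.

Lemma plateau_below m k : (0 < k)%N -> (k < m)%N -> plateau m k = plateau_level m.
Proof. by rewrite /plateau; case: k => // k _ ->. Qed.

Lemma plateau_at m : (0 < m)%N -> plateau m m = 0.
Proof. by rewrite /plateau ltnn eqxx; case: m. Qed.

Lemma plateau_above m k : (m < k)%N -> plateau m k = - plateau_depth m.
Proof. by move=> mk; rewrite /plateau (gtn_eqF mk) ltnNge (ltnW mk); case: k mk. Qed.

Lemma plateau_base k : (k <= M)%N -> plateau 1 k + geom k <= t * plateau 2 k.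
Proof.
rewrite /plateau /geom /plateau_depth /plateau_level /=.
case: k => [|[|[|k]]] kM /=.
- by rewrite mulr0 addr0.
- by rewrite add0r expr1 subrr mul0r addr0 mulr1.
- have := pow_ge0 M; have := ler_pow kM; have : 0 <= t ^+ M.+1 * (M%:R - 1).
    by apply: mulr_ge0; rewrite ?pow_ge0 // subr_ge0 ler1n (leq_trans _ kM).
  lra.
- have := pow_ge0 M; have := ler_pow kM; rewrite [t ^+ M.+1]exprS; lra.
Qed.

Lemma plateau_step m k : (2 <= m)%N -> (k <= M)%N ->
  t ^+ m * plateau m k + geom k <= t ^+ m * plateau m.+1 k.
Proof.
move=> m_ge2 kM; have m_gt0 : (0 < m)%N by apply: leq_trans m_ge2.
have depthE n : (2 <= n)%N -> plateau_depth n = t ^+ M * (M%:R - n%:R + 1).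
  by rewrite /plateau_depth; case: n => [|[|]].
have [->|k_gt0] := posnP k; first by rewrite /plateau /geom !mulr0 addr0.
rewrite /geom gtn_eqF //; case: (ltngtP k m) => [k_lt|k_gt|->].
- rewrite (plateau_below k_gt0 k_lt) (plateau_below k_gt0 (leqW k_lt)) /plateau_level.
  have : t ^+ k <= t ^+ m / t.
    by rewrite -(prednK m_gt0) exprSr mulfK ?gt_eqF // ler_pow // -ltnS prednK.
  have -> : (m.+1%:R - 2) / t = (m%:R - 2) / t + t^-1 :> R.
    by rewrite -natr1; field; rewrite gt_eqF.
  lra.
- rewrite plateau_above // depthE //.
  case: (ltngtP k m.+1) => [|k_gtS|k_eq]; first by rewrite ltnNge k_gt.
  + rewrite plateau_above // depthE ?(leq_trans m_ge2) // -natr1.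
    have : t ^+ k <= t ^+ m * t ^+ M by rewrite -exprD ler_pow // (leq_trans kM) ?leq_addl.
    lra.
  + rewrite k_eq in kM *; rewrite plateau_at // mulr0 exprSr.
    have depth_ge : t <= t ^+ M * (M%:R - m%:R + 1).
      have : m.+1%:R <= M%:R :> R by rewrite ler_nat.
      have := ler_pow (leq_trans m_gt0 (ltnW kM)); rewrite expr1 -natr1.
      have := pow_ge0 M; nra.
    have := ler_wpM2l (pow_ge0 m) depth_ge; lra.
- rewrite plateau_at // plateau_below // /plateau_level mulr0 add0r.
  have : 0 <= (m.+1%:R - 2) / t by rewrite divr_ge0 ?(ltW t_gt0) // subr_ge0 ler_nat.
  have := pow_ge0 m.
  nra.
Qed.

Lemma plateau_spike m k : (0 < m)%N -> plateau m k + spike m k <= geom k.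
Proof.
rewrite /spike /geom => m_gt0; case: eqP => [->|_]; last by rewrite subrr geom_ge0.
by rewrite plateau_at // add0r gtn_eqF.
Qed.

Lemma plateau_top k : (k <= M)%N -> plateau M.+1 k <= plateau_level M.+1.
Proof.
move=> kM; have [->|k_gt0] := posnP k; last by rewrite plateau_below.
rewrite /plateau /plateau_level /=; have : 0 <= (M.+1%:R - 2) / t.
  by rewrite divr_ge0 ?(ltW t_gt0) // subr_ge0 ler_nat.
lra.
Qed.

Variables (p c : R) (f : mechanism R M).
Hypotheses (f_DSIC : DSIC false p f) (f_ratio : ratio_guarantee false p f c).
Hypothesis c_ge0 : 0 <= c.

Local Notation r m := (outcome p f (plateau m) geom).

Let plateau_adm m : admissible false (plateau m). Proof. by split. Qed.
Let geom_adm : admissible false geom. Proof. by split. Qed.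

Lemma geom_lie_bound m : (0 < m)%N -> (m <= M)%N -> c * t ^+ m <= expect (r m) geom.
Proof.
move=> m_gt0 mM.
have spike_adm : admissible false (spike m).
  by split=> //; rewrite /spike eq_sym gtn_eqF //= oppr0.
have at_m : plateau m m + spike m m = t ^+ m by rewrite plateau_at // /spike eqxx add0r.
have := seller_lie_bound (a := 0) (d := 1) f_DSIC f_ratio c_ge0
  (plateau_adm m) geom_adm spike_adm mM.
rewrite at_m add0r mul1r; apply=> //; last by move=> k _; rewrite add0r mul1r plateau_spike.
- by rewrite plateau_at.
- by rewrite /spike eqxx pow_ge0.
- exact: exprn_gt0.
Qed.

Lemma plateau_chain n : (0 < n)%N -> (n <= M)%N ->
  n%:R * c <= expect (r n) (plateau n.+1).
Proof.
elim: n => [//|[_ _ M_ge1|n IH _ nM]].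
  have geom1 : geom 1 = t by rewrite /geom expr1.
  have := ratio_at f_ratio c_ge0 (plateau_adm 1) geom_adm M_ge1.
  rewrite plateau_at // geom1 add0r => /(_ (lexx 0) (ltW t_gt0) t_gt0).
  have r_distr := outcome_distr f_DSIC (plateau_adm 1) geom_adm.
  move=> /le_trans/(_ (ler_expect r_distr plateau_base)).
  by rewrite expectZ mulrC ler_pM2l // mul1r.
have r_distr := outcome_distr f_DSIC (plateau_adm n.+2) geom_adm.
have dom := ler_expect r_distr (fun k => plateau_step (m := n.+2) (k := k) isT).
rewrite expectD !expectZ in dom.
have lie := geom_lie_bound (m := n.+2) isT nM.
have step : expect (r n.+2) (plateau n.+2) + c <= expect (r n.+2) (plateau n.+3).
  by rewrite -(ler_pM2l (exprn_gt0 n.+2 t_gt0)) mulrDr; lra.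
have buy := buyer_IC f_DSIC (plateau_adm n.+2) (plateau_adm n.+1) geom_adm.
have := IH isT (ltnW nM); rewrite -[n.+2%:R]natr1 mulrDl mul1r; lra.
Qed.

Lemma general_ratio_bound : M%:R * c <= 1 + (M%:R - 1) / t.
Proof.
have r_distr := outcome_distr f_DSIC (plateau_adm M) geom_adm.
apply: le_trans (plateau_chain M_gt0 (leqnn M)) _.
apply: le_trans (ler_expect r_distr plateau_top) _.
rewrite expect_cst // /plateau_level -[M.+1%:R]natr1.
by have -> : M%:R + 1 - 2 = M%:R - 1 :> R by ring.
Qed.

End GeneralValuations.

Lemma harmonicS (R : realFieldType) n : harmonic R n.+1 = harmonic R n + n.+1%:R^-1.
Proof. by rewrite /harmonic big_ord_recr. Qed.

Lemma harmonic_gt0 (R : realFieldType) n : (0 < n)%N -> 0 < harmonic R n.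
Proof.
case: n => // n _; rewrite harmonicS ltr_wpDl ?invr_gt0 ?ltr0n //.
by apply: sumr_ge0 => i _; rewrite invr_ge0 ler0n.
Qed.

Section SubmodularValuations.
Variables (R : realFieldType) (M : nat) (x : R).
Hypotheses (M_gt0 : (0 < M)%N) (x_gt0 : 0 < x).

(* [tent_base] needs the steeper slope of the first tent. *)
Definition tent_slope (n : nat) : R := if n == 1%N then 3 * M%:R else M%:R.

Definition tent (n k : nat) : R :=
  Num.min ((1 - n%:R^-1) * k%:R)
    (Num.min (1 - k%:R / n%:R) (tent_slope n * (n%:R - k%:R))).

Definition quantity (k : nat) : R := k%:R.

Lemma tent_slope_ge0 n : 0 <= tent_slope n.
Proof. by rewrite /tent_slope; case: eqP => _; rewrite ?mulr_ge0 ?ler0n. Qed.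

Lemma tent_le n k : [/\ tent n k <= (1 - n%:R^-1) * k%:R, tent n k <= 1 - k%:R / n%:R
  & tent n k <= tent_slope n * (n%:R - k%:R)].
Proof. by rewrite /tent !ge_min !lexx /= !orbT. Qed.

Lemma concave_tent n : concave (tent n).
Proof.
by apply: concave_min; [|apply: concave_min] => k; rewrite -!natr1; lra.
Qed.

Lemma tent0 n : tent n 0 = 0.
Proof.
rewrite /tent mulr0 mul0r subr0 subr0 min_l // le_min ler01.
by rewrite mulr_ge0 ?tent_slope_ge0 ?ler0n.
Qed.

Lemma tent_at n : (0 < n)%N -> tent n n = 0.
Proof.
move=> n_gt0; have n_neq0 : n%:R != 0 :> R by rewrite pnatr_eq0 -lt0n.
rewrite /tent mulfV // !subrr mulr0 minxx min_r // mulrBl mul1r mulVf // subr_ge0.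
by rewrite ler1n.
Qed.

Lemma tent_base k : (k <= M)%N -> 2^-1 * (tent 1 k + quantity k) <= tent 2 k.
Proof.
move=> kM; have [b1 b2 b3] := tent_le 1 k; rewrite /quantity.
rewrite /tent_slope /= mulr1n invr1 subrr mul0r in b1 b3.
move: (tent 1 k) b1 b2 b3 => b b1 b2 b3.
have M_ge1 : 1 <= M%:R :> R by rewrite ler1n.
have z_ge0 := ler0n R k.
have zM : k%:R <= M%:R :> R by rewrite ler_nat.
rewrite /tent /tent_slope /= !le_min; apply/and3P; split; rewrite mulrC ler_pdivrMr //.
- have -> : (1 - 2^-1) * k%:R * 2 = k%:R :> R by field.
  lra.
- have -> : (1 - k%:R / 2) * 2 = 2 - k%:R :> R by field.
  case: (lerP (k%:R : R) 1) => z1; first lra.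
  have : 0 <= (3 * M%:R - 2) * (k%:R - 1) :> R by apply: mulr_ge0; lra.
  lra.
- have : 0 <= (M%:R - 1) * k%:R :> R by apply: mulr_ge0; lra.
  lra.
Qed.

Lemma tent_step n k : (2 <= n)%N -> (k <= M)%N ->
  tent n k + (n%:R * n.+1%:R)^-1 * quantity k <= tent n.+1 k.
Proof.
move=> n_ge2 kM; have [b1 b2 b3] := tent_le n k; rewrite /quantity.
have slopeE m : (2 <= m)%N -> tent_slope m = M%:R by case: m => [|[|]].
rewrite slopeE // in b3; move: (tent n k) b1 b2 b3 => b b1 b2 b3.
have z_ge0 := ler0n R k.
have zM : k%:R <= M%:R :> R by rewrite ler_nat.
have N2 : 2 <= n%:R :> R by rewrite ler_nat.
rewrite /tent slopeE ?(leq_trans n_ge2) // -natr1 !le_min; apply/and3P; split.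
- have : (1 - n%:R^-1) * k%:R + (n%:R * (n%:R + 1))^-1 * k%:R
         = (1 - (n%:R + 1)^-1) * k%:R :> R.
    by field; apply/andP; split; apply/eqP; lra.
  lra.
- have : 1 - k%:R / n%:R + (n%:R * (n%:R + 1))^-1 * k%:R = 1 - k%:R / (n%:R + 1) :> R.
    by field; apply/andP; split; apply/eqP; lra.
  lra.
- have : (n%:R * (n%:R + 1))^-1 * k%:R <= k%:R :> R.
    rewrite mulrC ler_pdivrMr; last by apply: mulr_gt0; lra.
    have : 1 <= n%:R * (n%:R + 1) :> R by nra.
    nra.
  lra.
Qed.

Variables (p c : R) (f : mechanism R M).
Hypotheses (f_DSIC : DSIC true p f) (f_ratio : ratio_guarantee true p f c).
Hypothesis c_ge0 : 0 <= c.

Local Notation r n := (outcome p f (tent n) quantity).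

Let tent_adm n : admissible true (tent n).
Proof. by split=> [|_]; [exact: tent0 | exact: concave_tent]. Qed.

Let quantity_adm : admissible true quantity.
Proof. by split=> [|_ k]; rewrite // /quantity -!natr1; lra. Qed.

Let lie_adm : admissible true (fun k => x * quantity k).
Proof. by split=> [|_ k]; rewrite /quantity ?mulr0 // -!natr1; lra. Qed.

Lemma quantity_lie_bound n : (0 < n)%N -> (n <= M)%N ->
  c * n%:R - x^-1 <= expect (r n) quantity.
Proof.
move=> n_gt0 nM; have xn_gt0 : 0 < x * n%:R by rewrite mulr_gt0 ?ltr0n.
have := seller_lie_bound (a := 1) (d := x) f_DSIC f_ratio c_ge0
  (tent_adm n) quantity_adm lie_adm nM.
rewrite tent_at // add0r => /(_ (lexx 0) (ltW xn_gt0) xn_gt0 (ltW x_gt0)).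
have tent_le1 k : tent n k <= 1.
  have [_ + _] := tent_le n k; have : 0 <= k%:R / n%:R :> R by rewrite divr_ge0.
  lra.
have welfare_le k : (k <= M)%N -> tent n k + x * quantity k <= 1 + x * quantity k.
  by rewrite lerD2r tent_le1.
move=> /(_ welfare_le) lie.
rewrite -(ler_pM2l x_gt0) mulrBr mulfV ?gt_eqF //; lra.
Qed.

Lemma tent_chain n : (0 < n)%N -> (n <= M)%N ->
  c * (harmonic R n.+1 - 1) - n.-1%:R / x <= expect (r n) (tent n.+1).
Proof.
elim: n => [//|[_ _ M_ge1|n IH _ nM]].
  have := ratio_at f_ratio c_ge0 (tent_adm 1) quantity_adm M_ge1.
  rewrite tent_at // add0r mulr1 => /(_ (lexx 0) ler01 ltr01).
  have r_distr := outcome_distr f_DSIC (tent_adm 1) quantity_adm.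
  have -> : c * (harmonic R 2 - 1) - 0%:R / x = 2^-1 * c.
    by rewrite !harmonicS /harmonic big_ord0 mul0r; field.
  have half_ge0 : 0 <= 2^-1 :> R by rewrite invr_ge0 ler0n.
  move=> /(ler_wpM2l half_ge0); rewrite -expectZ => /le_trans; apply.
  exact: ler_expect r_distr tent_base.
have r_distr := outcome_distr f_DSIC (tent_adm n.+2) quantity_adm.
have dom := ler_expect r_distr (fun k => tent_step (n := n.+2) (k := k) isT).
rewrite expectD expectZ in dom.
have lie := quantity_lie_bound (n := n.+2) isT nM.
have buy := buyer_IC f_DSIC (tent_adm n.+2) (tent_adm n.+1) quantity_adm.
have := IH isT (ltnW nM); rewrite [harmonic R n.+3]harmonicS /= -[n.+1%:R]natr1 mulrDl mul1r.
set q := (n.+2%:R * n.+3%:R)^-1 in dom.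
have q_ge0 : 0 <= q by rewrite invr_ge0 mulr_ge0 ?ler0n.
have q_le1 : q <= 1.
  by rewrite /q invr_le1 ?unitfE ?mulf_neq0 ?pnatr_eq0 ?mulr_gt0 ?ltr0n // -natrM ler1n.
have := ler_wpM2l q_ge0 lie.
have -> : q * (c * n.+2%:R - x^-1) = c * n.+3%:R^-1 - q * x^-1.
  by rewrite /q; field; rewrite gt_eqF // -!natrD !pnatr_eq0.
have : q * x^-1 <= x^-1 by apply: ler_piMl; rewrite // invr_ge0 ltW.
(* lra cannot treat the inverse of [n + 3] as an atom. *)
move: (n.+3%:R^-1) => w; lra.
Qed.

Lemma submodular_ratio_bound : c * harmonic R M <= 1 + M%:R / x.
Proof.
have r_distr := outcome_distr f_DSIC (tent_adm M) quantity_adm.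
have chain := tent_chain M_gt0 (leqnn M).
have lie := quantity_lie_bound M_gt0 (leqnn M).
have top k : (k <= M)%N -> tent M.+1 k + M.+1%:R^-1 * quantity k <= 1.
  move=> _; have [_ + _] := tent_le M.+1 k; rewrite /quantity mulrC.
  by move: (M.+1%:R^-1) => w; lra.
have := ler_expect r_distr top; rewrite expectD expectZ expect_cst //.
have w_ge0 : 0 <= M.+1%:R^-1 :> R by rewrite invr_ge0 ler0n.
have w_le1 : M.+1%:R^-1 <= 1 :> R by rewrite invr_le1 ?unitfE ?pnatr_eq0 ?ltr0n // ler1n.
have := ler_wpM2l w_ge0 lie.
have -> : M.+1%:R^-1 * (c * M%:R - x^-1) = c - c * M.+1%:R^-1 - M.+1%:R^-1 * x^-1.
  by field; rewrite gt_eqF //= addrC natr1 pnatr_eq0.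
have : M.+1%:R^-1 * x^-1 <= x^-1 by apply: ler_piMl; rewrite // invr_ge0 ltW.
have : M.-1%:R / x + x^-1 = M%:R / x.
  by rewrite -[in RHS](prednK M_gt0) -natr1 mulrDl mul1r.
rewrite harmonicS in chain; move: (M.+1%:R^-1) chain w_ge0 => w; lra.
Qed.

End SubmodularValuations.

Lemma DSIC_general_ratio_le1 (R : realFieldType) (M : nat) (p c : R) (f : mechanism R M) :
  (0 < M)%N -> DSIC false p f -> ratio_guarantee false p f c -> M%:R * c <= 1.
Proof.
move=> M_gt0 f_DSIC f_ratio; have [c_le0|c_gt0] := lerP c 0.
  by apply: le_trans (mulr_ge0_le0 (ler0n _ M) c_le0) ler01.
apply: (ler1_of_forall_ler1Ddiv (K := M%:R - 1)) => [|t t_ge2].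
  by rewrite subr_ge0 ler1n.
exact (general_ratio_bound M_gt0 t_ge2 f_DSIC f_ratio (ltW c_gt0)).
Qed.

Lemma DSIC_submodular_ratio_le1 (R : realFieldType) (M : nat) (p c : R) (f : mechanism R M) :
  (0 < M)%N -> DSIC true p f -> ratio_guarantee true p f c -> c * harmonic R M <= 1.
Proof.
move=> M_gt0 f_DSIC f_ratio; have [c_le0|c_gt0] := lerP c 0.
  by apply: le_trans (mulr_le0_ge0 c_le0 (ltW (harmonic_gt0 R M_gt0))) ler01.
apply: (ler1_of_forall_ler1Ddiv (K := M%:R)) => [|x x_ge2]; first exact: ler0n.
have x_gt0 : 0 < x by apply: lt_le_trans x_ge2.
exact (submodular_ratio_bound M_gt0 x_gt0 f_DSIC f_ratio (ltW c_gt0)).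
Qed.

Theorem corollary1 (R : realFieldType) (M : nat) (p : R) (f : mechanism R M) :
  (1 <= M)%N ->
  (DSIC false p f -> forall c : R, ratio_guarantee false p f c -> c <= (M%:R)^-1) /\
  (DSIC true p f -> forall c : R, ratio_guarantee true p f c -> c <= (harmonic R M)^-1).
Proof.
move=> M_gt0; split=> f_DSIC c f_ratio; rewrite -div1r ler_pdivlMr.
- by rewrite mulrC; apply: DSIC_general_ratio_le1 f_DSIC f_ratio.
- by rewrite ltr0n.
- exact: DSIC_submodular_ratio_le1 f_DSIC f_ratio.
- exact: harmonic_gt0.
Qed.
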